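(* Let $\omega\le\lambda\le\kappa$ be cardinals, $\tau$ a signature, $\mu:=|\mathrm{fnc}(\tau)|$, $\nu\ge 1$ a cardinal, and $\varphi$ a sentence of $\mathcal L_{\kappa,\lambda}(\tau)$. Let $\kappa':=\max(\kappa,\mu^+,\nu^+)$ and $\lambda':=\max(\lambda,\nu^+)$. Then each of $\vartheta_{\le\nu}(\varphi)$ and $\vartheta_{\nu}(\varphi)$ is expressible by a sentence of $\mathcal L_{\kappa',\lambda'}(\tau)$.
   Context: $\mathrm{fnc}(\tau)$ is the set of function symbols of $\tau$, constant symbols counted as $0$-ary function symbols. Models are nonempty; a submodel of a $\tau$-model is a substructure (nonempty subset closed under the interpretations of all symbols in $\mathrm{fnc}(\tau)$, with induced structure). For infinite cardinals $\lambda\le\kappa$, $\mathcal L_{\kappa,\lambda}(\tau)$ is the infinitary first-order language with equality whose formulas are built from atomic formulas by negation, conjunctions and disjunctions of fewer than $\kappa$ formulas, and existential/universal quantification over blocks of fewer than $\lambda$ variables. $\mathfrak A\vDash\vartheta_{\nu}(\varphi)$ iff $\mathfrak A$ has a submodel of cardinality exactly $\nu$ satisfying $\varphi$; $\mathfrak A\vDash\vartheta_{\le\nu}(\varphi)$ iff $\mathfrak A$ has a submodel of cardinality $\le\nu$ satisfying $\varphi$. A property is expressible by a sentence $\chi$ if for every $\tau$-model $\mathfrak A$, $\mathfrak A$ has the property iff $\mathfrak A\vDash\chi$. *)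

(* Infinitary logic L_{kappa,lambda}(tau) with cardinals
   represented by types (cardinality comparisons via injections). *)
From Stdlib Require Import Vectors.Fin.

Definition le_card (X Y : Type) : Prop := exists f : X -> Y, forall x y, f x = f y -> x = y.
Definition lt_card (X Y : Type) : Prop := le_card X Y /\ ~ le_card Y X.
Definition bij_card (X Y : Type) : Prop :=
  exists (f : X -> Y) (g : Y -> X), (forall x, g (f x) = x) /\ (forall y, f (g y) = y).

(* K' is the cardinal max(|K|, |Mu|^+, |Nu|^+): the least cardinal that is
   >= |K|, > |Mu| and > |Nu|. *)
Definition is_max_succ3 (K Mu Nu K' : Type) : Prop :=
  le_card K K' /\ lt_card Mu K' /\ lt_card Nu K' /\
  (forall X : Type, le_card K X -> lt_card Mu X -> lt_card Nu X -> le_card K' X).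

(* L' is max(|L|, |Nu|^+). *)
Definition is_max_succ2 (L Nu L' : Type) : Prop :=
  le_card L L' /\ lt_card Nu L' /\
  (forall X : Type, le_card L X -> lt_card Nu X -> le_card L' X).

Record signature := {
  fsym : Type;                (* function symbols, constants = 0-ary *)
  farity : fsym -> nat;
  rsym : Type;
  rarity : rsym -> nat }.

Section Syntax.
Variable tau : signature.

Inductive term (V : Type) : Type :=
| tvar : V -> term V
| tapp : forall f : fsym tau, (Fin.t (farity tau f) -> term V) -> term V.

(* Formulas of L_{K,L}(tau) with free variables among V:
   conjunctions/disjunctions over index sets of size < |K|,
   quantifier blocks over variable sets of size < |L|. *)
Inductive form (K L : Type) : Type -> Type :=
| fEq : forall V, term V -> term V -> form K L V
| fRel : forall V (r : rsym tau), (Fin.t (rarity tau r) -> term V) -> form K L V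
| fNeg : forall V, form K L V -> form K L V
| fConj : forall V (I : Type), lt_card I K -> (I -> form K L V) -> form K L V
| fDisj : forall V (I : Type), lt_card I K -> (I -> form K L V) -> form K L V
| fEx : forall V (W : Type), lt_card W L -> form K L (V + W) -> form K L V
| fAll : forall V (W : Type), lt_card W L -> form K L (V + W) -> form K L V.

Definition sentence (K L : Type) := form K L Empty_set.
End Syntax.

Arguments tvar {tau V}.
Arguments tapp {tau V}.

Record structure (tau : signature) := {
  carrier : Type;
  carrier_ne : inhabited carrier;
  finterp : forall f : fsym tau, (Fin.t (farity tau f) -> carrier) -> carrier;
  rinterp : forall r : rsym tau, (Fin.t (rarity tau r) -> carrier) -> Prop }.

Arguments carrier {tau}.
Arguments finterp {tau}.
Arguments rinterp {tau}.

Section Semantics.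
Variable tau : signature.
Variable A : structure tau.

Fixpoint eval {V : Type} (a : V -> carrier A) (t : term tau V) : carrier A :=
  match t with
  | tvar v => a v
  | tapp f args => finterp A f (fun i => eval a (args i))
  end.

Definition extend {V W : Type} (a : V -> carrier A) (b : W -> carrier A)
  (x : V + W) : carrier A :=
  match x with inl v => a v | inr w => b w end.

Fixpoint sat {K L V : Type} (p : form tau K L V) : (V -> carrier A) -> Prop :=
  match p in form _ _ _ V0 return (V0 -> carrier A) -> Prop with
  | fEq _ _ _ _ t1 t2 => fun a => eval a t1 = eval a t2
  | fRel _ _ _ _ r args => fun a => rinterp A r (fun i => eval a (args i))
  | fNeg _ _ _ _ q => fun a => ~ sat q a
  | fConj _ _ _ _ Ix _ qs => fun a => forall i : Ix, sat (qs i) a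
  | fDisj _ _ _ _ Ix _ qs => fun a => exists i : Ix, sat (qs i) a
  | fEx _ _ _ _ W _ q => fun a => exists b : W -> carrier A, sat q (extend a b)
  | fAll _ _ _ _ W _ q => fun a => forall b : W -> carrier A, sat q (extend a b)
  end.

Definition models {K L : Type} (phi : sentence tau K L) : Prop :=
  sat phi (fun e : Empty_set => match e with end).
End Semantics.

Definition closed_sub {tau} (A : structure tau) (S : carrier A -> Prop) : Prop :=
  forall (f : fsym tau) (args : Fin.t (farity tau f) -> carrier A),
    (forall i, S (args i)) -> S (finterp A f args).

Definition substructure {tau} (A : structure tau) (S : carrier A -> Prop)
  (Sne : exists x, S x) (Scl : closed_sub A S) : structure tau :=
  {| carrier := {x : carrier A | S x};
     carrier_ne := match Sne with ex_intro _ x Hx => inhabits (exist _ x Hx) end;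
     finterp := fun f args =>
       exist _ (finterp A f (fun i => proj1_sig (args i)))
               (Scl f _ (fun i => proj2_sig (args i)));
     rinterp := fun r args => rinterp A r (fun i => proj1_sig (args i)) |}.

Definition theta_eq {tau K L} (Nu : Type) (phi : sentence tau K L)
  (A : structure tau) : Prop :=
  exists (S : carrier A -> Prop) (Sne : exists x, S x) (Scl : closed_sub A S),
    bij_card {x : carrier A | S x} Nu /\ models tau (substructure A S Sne Scl) phi.

Definition theta_le {tau K L} (Nu : Type) (phi : sentence tau K L)
  (A : structure tau) : Prop :=
  exists (S : carrier A -> Prop) (Sne : exists x, S x) (Scl : closed_sub A S),
    le_card {x : carrier A | S x} Nu /\ models tau (substructure A S Sne Scl) phi.

Definition expressible {tau} (K L : Type) (P : structure tau -> Prop) : Prop :=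
  exists chi : sentence tau K L, forall A : structure tau, P A <-> models tau A chi.

From Stdlib Require Import Vectors.Fin List Lia Setoid Classical ClassicalEpsilon
  FunctionalExtensionality ProofIrrelevance.

(* A submodel of cardinality at most [Nu] is the range of a [Nu]-tuple, so it can be guessed
   by one existential block of [Nu] variables.  The sentence then says that the values of
   the tuple are closed under the function symbols (a conjunction over [fnc tau], whence
   [mu < K']) and satisfy [phi] with every quantifier relativized to those values (each
   relativized quantifier needs a disjunction over [Nu], whence [Nu < K']).  Cardinality
   exactly [Nu] additionally asks the tuple to be injective. *)

Lemma le_card_trans (X Y Z : Type) : le_card X Y -> le_card Y Z -> le_card X Z.
Proof. intros [f Hf] [g Hg]. exists (fun x => g (f x)). auto. Qed.

Lemma lt_le_card_trans (X Y Z : Type) : lt_card X Y -> le_card Y Z -> lt_card X Z.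
Proof.
  intros [HXY HYX] HYZ. split; [eapply le_card_trans; eauto|].
  intros HZX. apply HYX. eapply le_card_trans; eauto.
Qed.

Lemma le_lt_card_trans (X Y Z : Type) : le_card X Y -> lt_card Y Z -> lt_card X Z.
Proof.
  intros HXY [HYZ HZY]. split; [eapply le_card_trans; eauto|].
  intros HZX. apply HZY. eapply le_card_trans; eauto.
Qed.

Lemma le_card_sig (X : Type) (P : X -> Prop) : le_card {x | P x} X.
Proof.
  exists (@proj1_sig _ _). intros x y E.
  apply eq_sig_hprop; [intros; apply proof_irrelevance | exact E].
Qed.

(* Pigeonhole: [n+1] distinct naturals cannot all lie below [n]. *)
Lemma lt_card_fin_nat (n : nat) : lt_card (Fin.t n) nat.
Proof.
  split.
  - exists (fun x => proj1_sig (Fin.to_nat x)). intros x y E. now apply Fin.to_nat_inj.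
  - intros [f Hf].
    set (g := fun k => proj1_sig (Fin.to_nat (f k))).
    assert (g_inj : forall k l, g k = g l -> k = l).
    { intros k l E. apply Hf, Fin.to_nat_inj, E. }
    assert (g_lt : forall k, g k < n).
    { intros k. unfold g. now destruct (Fin.to_nat (f k)). }
    assert (Hdup : NoDup (map g (seq 0 (S n)))).
    { apply NoDup_map_NoDup_ForallPairs; [intros x y _ _; apply g_inj | apply seq_NoDup]. }
    assert (Hincl : incl (map g (seq 0 (S n))) (seq 0 n)).
    { intros x Hx. apply in_map_iff in Hx. destruct Hx as [k [<- _]].
      apply in_seq. specialize (g_lt k). lia. }
    pose proof (NoDup_incl_length Hdup Hincl) as Hlen.
    rewrite length_map, !length_seq in Hlen. lia.
Qed.

Lemma lt_card_bool_nat : lt_card bool nat.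
Proof.
  apply le_lt_card_trans with (Fin.t 2); [|apply lt_card_fin_nat].
  exists (fun b : bool => if b then Fin.F1 else Fin.FS Fin.F1).
  intros [] [] E; try reflexivity; discriminate.
Qed.

Definition is_range {X Y : Type} (b : X -> Y) (S : Y -> Prop) : Prop :=
  forall y, S y <-> exists x, y = b x.

Section Enumerations.
Variables (X Nu : Type) (S : X -> Prop).

Lemma le_card_is_range : (exists x, S x) -> le_card {x | S x} Nu ->
  exists b : Nu -> X, is_range b S.
Proof.
  intros [x0 Sx0] [g g_inj].
  set (inv j := epsilon (inhabits (exist S x0 Sx0)) (fun x => g x = j)).
  exists (fun j => proj1_sig (inv j)). intros y. split.
  - intros Sy. exists (g (exist S y Sy)).
    assert (E : g (inv (g (exist S y Sy))) = g (exist S y Sy)) by (apply epsilon_spec; eauto).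
    now rewrite (g_inj _ _ E).
  - intros [j ->]. exact (proj2_sig (inv j)).
Qed.

Lemma is_range_le_card (b : Nu -> X) : is_range b S -> le_card {x | S x} Nu.
Proof.
  intros Hb.
  exists (fun x => proj1_sig (constructive_indefinite_description _ (proj1 (Hb _) (proj2_sig x)))).
  intros x y.
  destruct (constructive_indefinite_description _ (proj1 (Hb _) (proj2_sig x))) as [jx Ex].
  destruct (constructive_indefinite_description _ (proj1 (Hb _) (proj2_sig y))) as [jy Ey].
  simpl. intros <-. apply eq_sig_hprop; [intros; apply proof_irrelevance|]. congruence.
Qed.

Lemma bij_card_is_range : bij_card {x | S x} Nu ->
  exists b : Nu -> X, (forall j k, b j = b k -> j = k) /\ is_range b S.
Proof.
  intros [f [g [gf fg]]]. exists (fun j => proj1_sig (g j)). split.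
  - intros j k E. rewrite <- (fg j), <- (fg k). f_equal.
    apply eq_sig_hprop; [intros; apply proof_irrelevance | exact E].
  - intros y. split.
    + intros Sy. exists (f (exist S y Sy)). now rewrite gf.
    + intros [j ->]. exact (proj2_sig (g j)).
Qed.

Lemma injective_is_range_bij_card (b : Nu -> X) :
  (forall j k, b j = b k -> j = k) -> is_range b S -> bij_card {x | S x} Nu.
Proof.
  intros b_inj Hb.
  exists (fun x => proj1_sig (constructive_indefinite_description _ (proj1 (Hb _) (proj2_sig x)))).
  exists (fun j => exist S (b j) (proj2 (Hb _) (ex_intro _ j eq_refl))). split.
  - intros x. destruct (constructive_indefinite_description _ _) as [j Ej].
    apply eq_sig_hprop; [intros; apply proof_irrelevance|]. simpl. now symmetry.
  - intros j. destruct (constructive_indefinite_description _ _) as [k Ek]. simpl in *.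
    now apply b_inj.
Qed.

End Enumerations.

Fixpoint trename {tau : signature} {V V' : Type} (s : V -> V') (t : term tau V) : term tau V' :=
  match t with
  | tvar v => tvar (s v)
  | tapp f args => tapp f (fun i => trename s (args i))
  end.

Definition sum_map_l {V V' W : Type} (s : V -> V') (x : V + W) : V' + W :=
  match x with inl v => inl (s v) | inr w => inr w end.

Section RangeFormulas.
Variables (tau : signature) (K L Nu : Type).
Hypotheses (hb : lt_card bool K) (hN : lt_card Nu K).

Definition fAnd {V} (p q : form tau K L V) : form tau K L V :=
  fConj tau K L V bool hb (fun b => if b then p else q).

Definition fMem {V} (t : term tau V) (n : Nu -> V) : form tau K L V :=
  fDisj tau K L V Nu hN (fun j => fEq tau K L V t (tvar (n j))).

Definition fAmong {V W} (hWK : lt_card W K) (n : Nu -> V) : form tau K L (V + W) :=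
  fConj tau K L (V + W) W hWK (fun w => fMem (tvar (inr w)) (fun j => inl (n j))).

Definition fExAmong {V W} (hWK : lt_card W K) (hWL : lt_card W L) (n : Nu -> V)
  (q : form tau K L (V + W)) : form tau K L V :=
  fEx tau K L V W hWL (fAnd (fAmong hWK n) q).

Definition fAllAmong {V W} (hWK : lt_card W K) (hWL : lt_card W L) (n : Nu -> V)
  (q : form tau K L (V + W)) : form tau K L V :=
  fNeg tau K L V (fExAmong hWK hWL n (fNeg tau K L _ q)).

Definition fClosed {V} (hfK : forall m, lt_card (Fin.t m) K) (hfL : forall m, lt_card (Fin.t m) L)
  (hF : lt_card (fsym tau) K) (n : Nu -> V) : form tau K L V :=
  fConj tau K L V (fsym tau) hF (fun f =>
    fAllAmong (hfK _) (hfL _) n (fMem (tapp f (fun i => tvar (inr i))) (fun j => inl (n j)))).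

Definition fInjective {V} (hne : forall j : Nu, lt_card {k : Nu | k <> j} K) (n : Nu -> V)
  : form tau K L V :=
  fConj tau K L V Nu hN (fun j => fConj tau K L V {k : Nu | k <> j} (hne j)
    (fun k => fNeg tau K L V (fEq tau K L V (tvar (n j)) (tvar (n (proj1_sig k)))))).

Variable A : structure tau.

Lemma sat_fAnd {V} (p q : form tau K L V) a :
  sat tau A (fAnd p q) a <-> sat tau A p a /\ sat tau A q a.
Proof.
  split.
  - intros H. exact (conj (H true) (H false)).
  - intros [Hp Hq] []; assumption.
Qed.

Lemma sat_fExAmong {V W} hWK hWL (n : Nu -> V) q a :
  sat tau A (fExAmong (W := W) hWK hWL n q) a <->
  exists b : W -> carrier A, (forall w, exists j, b w = a (n j)) /\ sat tau A q (extend tau A a b).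
Proof. simpl. now setoid_rewrite sat_fAnd. Qed.

Lemma sat_fAllAmong {V W} hWK hWL (n : Nu -> V) q a :
  sat tau A (fAllAmong (W := W) hWK hWL n q) a <->
  forall b : W -> carrier A, (forall w, exists j, b w = a (n j)) -> sat tau A q (extend tau A a b).
Proof.
  unfold fAllAmong. cbn [sat]. rewrite sat_fExAmong. cbn [sat]. split.
  - intros H b Hb. apply NNPP. intros Hq. eauto.
  - intros H [b [Hb Hq]]. eauto.
Qed.

Lemma sat_fClosed {V} hfK hfL hF (n : Nu -> V) a :
  sat tau A (fClosed hfK hfL hF n) a <-> closed_sub A (fun x => exists j, x = a (n j)).
Proof.
  unfold fClosed, closed_sub. cbn [sat]. setoid_rewrite sat_fAllAmong. cbn [sat extend].
  reflexivity.
Qed.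

Lemma sat_fInjective {V} hne (n : Nu -> V) a :
  sat tau A (fInjective hne n) a <-> forall j k, a (n j) = a (n k) -> j = k.
Proof.
  simpl. split.
  - intros H j k E. apply NNPP. intros Hjk.
    exact (H j (exist _ k (fun e => Hjk (eq_sym e))) E).
  - intros H j [k Hk] E. apply Hk. symmetry. now apply H.
Qed.

End RangeFormulas.

Section Relativization.
Variables (tau : signature) (K L K' L' Nu : Type).
Hypotheses (hKK : le_card K K') (hLL : le_card L L') (hLK : le_card L K')
  (hb : lt_card bool K') (hN : lt_card Nu K').

(* [relativize p V' s n] restricts all quantifiers of [p] to the values of the variables [n],
   after renaming the free variables of [p] along [s]. *)
Fixpoint relativize {V} (p : form tau K L V) {struct p}
  : forall V', (V -> V') -> (Nu -> V') -> form tau K' L' V' :=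
  match p in form _ _ _ V0 return forall V', (V0 -> V') -> (Nu -> V') -> form tau K' L' V' with
  | fEq _ _ _ _ t1 t2 => fun V' s n => fEq _ _ _ V' (trename s t1) (trename s t2)
  | fRel _ _ _ _ r args => fun V' s n => fRel _ _ _ V' r (fun i => trename s (args i))
  | fNeg _ _ _ _ q => fun V' s n => fNeg _ _ _ V' (relativize q V' s n)
  | fConj _ _ _ _ Ix HI qs => fun V' s n =>
      fConj _ _ _ V' Ix (lt_le_card_trans _ _ _ HI hKK) (fun i => relativize (qs i) V' s n)
  | fDisj _ _ _ _ Ix HI qs => fun V' s n =>
      fDisj _ _ _ V' Ix (lt_le_card_trans _ _ _ HI hKK) (fun i => relativize (qs i) V' s n)
  | fEx _ _ _ _ W HW q => fun V' s n =>
      fExAmong tau K' L' Nu hb hN (lt_le_card_trans _ _ _ HW hLK) (lt_le_card_trans _ _ _ HW hLL)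
        n (relativize q (V' + W) (sum_map_l s) (fun j => inl (n j)))
  | fAll _ _ _ _ W HW q => fun V' s n =>
      fAllAmong tau K' L' Nu hb hN (lt_le_card_trans _ _ _ HW hLK) (lt_le_card_trans _ _ _ HW hLL)
        n (relativize q (V' + W) (sum_map_l s) (fun j => inl (n j)))
  end.

Variables (A : structure tau) (S : carrier A -> Prop) (Sne : exists x, S x) (Scl : closed_sub A S).
Let B := substructure A S Sne Scl.

Lemma eval_trename {V V'} (s : V -> V') (c : V -> carrier B) (a : V' -> carrier A) :
  (forall v, proj1_sig (c v) = a (s v)) ->
  forall t : term tau V, proj1_sig (eval tau B c t) = eval tau A a (trename s t).
Proof.
  intros Hc t. induction t as [v | f args IH]; simpl.
  - apply Hc.
  - f_equal. apply functional_extensionality, IH.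
Qed.

Lemma extend_sum_map_l {V V' W} (s : V -> V') (c : V -> carrier B) (a : V' -> carrier A)
  (b : W -> carrier B) :
  (forall v, proj1_sig (c v) = a (s v)) ->
  forall v, proj1_sig (extend tau B c b v) = extend tau A a (fun w => proj1_sig (b w)) (sum_map_l s v).
Proof. intros Hc [v | w]; simpl; auto. Qed.

Lemma ex_sub_tuple {W} (P : (W -> carrier A) -> Prop) :
  (exists b : W -> carrier B, P (fun w => proj1_sig (b w))) <->
  exists b : W -> carrier A, (forall w, S (b w)) /\ P b.
Proof.
  split.
  - intros [b Hb]. exists (fun w => proj1_sig (b w)). split; [intros w; exact (proj2_sig (b w)) | exact Hb].
  - intros [b [Sb Hb]]. now exists (fun w => exist S (b w) (Sb w)).
Qed.

Lemma all_sub_tuple {W} (P : (W -> carrier A) -> Prop) :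
  (forall b : W -> carrier B, P (fun w => proj1_sig (b w))) <->
  forall b : W -> carrier A, (forall w, S (b w)) -> P b.
Proof.
  split.
  - intros H b Sb. exact (H (fun w => exist S (b w) (Sb w))).
  - intros H b. apply H. intros w. exact (proj2_sig (b w)).
Qed.

Lemma sat_relativize {V} (p : form tau K L V) :
  forall V' (s : V -> V') (n : Nu -> V') (c : V -> carrier B) (a : V' -> carrier A),
    (forall v, proj1_sig (c v) = a (s v)) -> is_range (fun j => a (n j)) S ->
    (sat tau B p c <-> sat tau A (relativize p V' s n) a).
Proof.
  induction p as [V t1 t2 | V r args | V q IH | V Ix HI qs IH | V Ix HI qs IH | V W HW q IH
                 | V W HW q IH];
    intros V' s n c a Hc HS; cbn [relativize sat].
  - rewrite <- !(eval_trename s c a Hc). split; [congruence|].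
    intros E. apply eq_sig_hprop; [intros; apply proof_irrelevance | exact E].
  - replace (fun i => eval tau A a (trename s (args i)))
      with (fun i => proj1_sig (eval tau B c (args i))); [reflexivity|].
    apply functional_extensionality. intros i. now apply eval_trename.
  - now rewrite (IH V' s n c a Hc HS).
  - now setoid_rewrite (fun i => IH i V' s n c a Hc HS).
  - now setoid_rewrite (fun i => IH i V' s n c a Hc HS).
  - rewrite sat_fExAmong. setoid_rewrite <- (HS _).
    etransitivity; [|apply ex_sub_tuple]. cbv beta.
    split; intros [b Hb]; exists b; [rewrite <- IH | rewrite IH]; eauto using extend_sum_map_l.
  - rewrite sat_fAllAmong. setoid_rewrite <- (HS _).
    etransitivity; [|apply all_sub_tuple]. cbv beta.
    split; intros H b; [rewrite <- IH | rewrite IH]; eauto using extend_sum_map_l.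
Qed.

End Relativization.

Section TupleSentences.
Variables (tau : signature) (K L K' L' Nu : Type) (phi : sentence tau K L).
Hypotheses (hKK : le_card K K') (hLL : le_card L L') (hLK : le_card L K')
  (hb : lt_card bool K') (hN : lt_card Nu K') (hNL : lt_card Nu L') (hF : lt_card (fsym tau) K')
  (hfK : forall m, lt_card (Fin.t m) K') (hfL : forall m, lt_card (Fin.t m) L')
  (hne : forall j : Nu, lt_card {k : Nu | k <> j} K') (hNu : inhabited Nu).

Definition tuple_env {A : structure tau} (b : Nu -> carrier A) : Empty_set + Nu -> carrier A :=
  extend tau A (fun e : Empty_set => match e with end) b.

(* The free variables [inr j] name a [Nu]-tuple whose values form a submodel satisfying [phi]. *)
Definition fSubmodel : form tau K' L' (Empty_set + Nu) :=
  fAnd tau K' L' hb (fClosed tau K' L' Nu hb hN hfK hfL hF inr)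
    (relativize tau K L K' L' Nu hKK hLL hLK hb hN phi _ (fun e : Empty_set => match e with end) inr).

Lemma sat_fSubmodel_of_range (A : structure tau) S Sne Scl (b : Nu -> carrier A) :
  is_range b S -> models tau (substructure A S Sne Scl) phi -> sat tau A fSubmodel (tuple_env b).
Proof.
  intros HS Hphi. apply sat_fAnd. split.
  - apply sat_fClosed. intros f args Hargs. apply HS, Scl. intros i. apply HS, Hargs.
  - rewrite <- sat_relativize; [exact Hphi | intros [] | exact HS].
Qed.

Lemma range_of_sat_fSubmodel (A : structure tau) (b : Nu -> carrier A) :
  sat tau A fSubmodel (tuple_env b) ->
  exists Sne Scl, models tau (substructure A (fun x => exists j, x = b j) Sne Scl) phi.
Proof.
  intros [Hcl Hphi]%sat_fAnd. apply sat_fClosed in Hcl.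
  destruct hNu as [j0]. exists (ex_intro _ (b j0) (ex_intro _ j0 eq_refl)), Hcl.
  unfold models. rewrite sat_relativize; [exact Hphi | intros [] | intros y; reflexivity].
Qed.

Lemma expressible_theta_le : expressible K' L' (theta_le Nu phi).
Proof.
  exists (fEx tau K' L' Empty_set Nu hNL fSubmodel). intros A. split.
  - intros (S & Sne & Scl & HS & Hphi).
    destruct (le_card_is_range _ Nu S Sne HS) as [b Hb].
    exists b. exact (sat_fSubmodel_of_range A S Sne Scl b Hb Hphi).
  - intros [b Hb]. destruct (range_of_sat_fSubmodel A b Hb) as (Sne & Scl & Hphi).
    exists _, Sne, Scl. split; [|exact Hphi].
    apply is_range_le_card with b. intros y; reflexivity.
Qed.

Lemma expressible_theta_eq : expressible K' L' (theta_eq Nu phi).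
Proof.
  exists (fEx tau K' L' Empty_set Nu hNL
    (fAnd tau K' L' hb fSubmodel (fInjective tau K' L' Nu hN hne inr))).
  intros A. split.
  - intros (S & Sne & Scl & HS & Hphi).
    destruct (bij_card_is_range _ Nu S HS) as [b [b_inj Hb]].
    exists b. apply sat_fAnd. split.
    + exact (sat_fSubmodel_of_range A S Sne Scl b Hb Hphi).
    + apply sat_fInjective, b_inj.
  - intros [b [Hb b_inj]%sat_fAnd]. rewrite sat_fInjective in b_inj.
    destruct (range_of_sat_fSubmodel A b Hb) as (Sne & Scl & Hphi).
    exists _, Sne, Scl. split; [|exact Hphi].
    apply injective_is_range_bij_card with b; [exact b_inj | intros y; reflexivity].
Qed.

End TupleSentences.

Theorem lemma1 (K L : Type) (tau : signature) (Nu : Type) (K' L' : Type)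
  (hLinf : le_card nat L) (hLK : le_card L K)
  (hNu : inhabited Nu)
  (hK' : is_max_succ3 K (fsym tau) Nu K')
  (hL' : is_max_succ2 L Nu L')
  (phi : sentence tau K L) :
  expressible K' L' (theta_le Nu phi) /\ expressible K' L' (theta_eq Nu phi).
Proof.
  destruct hK' as (hKK & hF & hN & _), hL' as (hLL & hNL & _).
  assert (hLK' : le_card L K') by exact (le_card_trans _ _ _ hLK hKK).
  assert (hnatK : le_card nat K') by exact (le_card_trans _ _ _ hLinf hLK').
  assert (hnatL : le_card nat L') by exact (le_card_trans _ _ _ hLinf hLL).
  assert (hb : lt_card bool K') by exact (lt_le_card_trans _ _ _ lt_card_bool_nat hnatK).
  assert (hfK : forall m, lt_card (Fin.t m) K')
    by (intros m; exact (lt_le_card_trans _ _ _ (lt_card_fin_nat m) hnatK)).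
  assert (hfL : forall m, lt_card (Fin.t m) L')
    by (intros m; exact (lt_le_card_trans _ _ _ (lt_card_fin_nat m) hnatL)).
  assert (hne : forall j : Nu, lt_card {k : Nu | k <> j} K')
    by (intros j; exact (le_lt_card_trans _ _ _ (le_card_sig _ _) hN)).
  split.
  - exact (expressible_theta_le tau K L K' L' Nu phi hKK hLL hLK' hb hN hNL hF hfK hfL hNu).
  - exact (expressible_theta_eq tau K L K' L' Nu phi hKK hLL hLK' hb hN hNL hF hfK hfL hne hNu).
Qed.
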